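(* For every integer $k\ge0$ there exist symmetric polynomials $\phi_i^k(y_1,\dots,y_i)$ for $1\le i\le k+2$ and symmetric polynomials $\varphi_j^k(y_1,\dots,y_j)$ for $2\le j\le k+2$ such that $$\phi_1^k=1,\quad\phi_{k+1}^k=1,\quad\phi_{k+2}^k=0,\qquad \varphi_2^k(y_1,y_2)=\sum_{i=0}^ky_1^iy_2^{k-i},\quad\varphi_{k+2}^k=1,$$ and for every $1\le i\le k+1$, $$\phi_i^k(y_1,\dots,y_i)\,y_{i+1}^{k+2-i}-\varphi_{i+1}^k(y_1,\dots,y_{i+1})\,y_{i+1}=-\phi_{i+1}^k(y_1,\dots,y_{i+1})\,y_1y_2\cdots y_{i+1}.$$
   Context: A symmetric polynomial in variables $y_1,\dots,y_n$ is a polynomial (with real coefficients) invariant under every permutation of the variables. *)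

From Stdlib Require Import Reals.
From HB Require Import structures.
From mathcomp Require Import all_boot all_order all_algebra.
From mathcomp Require Import Rstruct.
From mathcomp.multinomials Require Import mpoly.
Set Implicit Arguments. Unset Strict Implicit. Unset Printing Implicit Defensive.
Import Order.TTheory GRing.Theory Num.Theory.
Local Open Scope ring_scope.

(* Real coefficients: Stdlib's R (a realType via Rstruct).
   A polynomial in variables y_1..y_n is an element of {mpoly R[n]},
   variable y_(j+1) being 'X_j for j : 'I_n. *)

(* The embedding {mpoly R[n]} -> {mpoly R[n.+1]} (y_i |-> y_i) is mpoly's mwiden. *)

(* Take for phi_i the sum of all monomials in i variables of degree (i-1)(k+1-i)
   with every exponent at most k+1-i, and for varphi_j the same with the bound
   k+2-j; these are visibly symmetric. Writing P(n,a) for such a sum (bound a,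
   degree (n-1)a), the required identity becomes
     P(n+2,a+1) y_{n+2} = P(n+1,a+1) y_{n+2}^(a+2) + P(n+2,a) y_1...y_{n+2},
   which is checked coefficientwise. A monomial of P(n+2,a+1) whose last exponent
   is a+1 leaves a monomial of P(n+1,a+1) in the first n+1 variables; if the last
   exponent is at most a, the first n+1 exponents sum to more than n(a+1), so
   none of them vanishes, and dividing by y_1...y_{n+2} gives a monomial of
   P(n+2,a). *)

From Stdlib Require Import Reals.
From HB Require Import structures.
From mathcomp Require Import all_boot all_order all_algebra.
From mathcomp Require Import Rstruct.
From mathcomp Require Import fingroup perm zify.
From mathcomp.multinomials Require Import mpoly.
Import Order.TTheory GRing.Theory Num.Theory.
Set Implicit Arguments. Unset Strict Implicit. Unset Printing Implicit Defensive.
Local Open Scope ring_scope.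

Lemma lift_max_widen n (i : 'I_n) : lift ord_max i = widen_ord (leqnSn n) i.
Proof. by apply: val_inj; exact: lift_max. Qed.

Lemma ord_max_widenF n (i : 'I_n) : (ord_max == widen_ord (leqnSn n) i) = false.
Proof. by rewrite -(inj_eq val_inj) /= gtn_eqF. Qed.

Lemma forall_ord_recr n (P : pred 'I_n.+1) :
  [forall i, P i] = [forall i : 'I_n, P (widen_ord (leqnSn n) i)] && P ord_max.
Proof.
apply/forallP/andP => [P_all | [/forallP P_widen P_max] i].
  by split; [apply/forallP => i|].
by case: (unliftP ord_max i) => [j ->|-> //]; rewrite lift_max_widen.
Qed.

Section MboxCount.
Local Open Scope nat_scope.

Lemma mbox_rec_count n a (f : 'I_n.+1 -> nat) x :
  [&& 0 < x, \sum_i f i + (x - 1) == n.+1 * a.+1, [forall i, f i <= a.+1] & x - 1 <= a.+1]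
  = [&& x == a.+2, \sum_i f i == n * a.+1 & [forall i, f i <= a.+1]]
    + ([forall i, 0 < f i] && (0 < x))
      && [&& \sum_i (f i - 1) + (x - 1) == n.+1 * a, [forall i, f i - 1 <= a] & x - 1 <= a]
    :> nat.
Proof.
have -> : [forall i, f i - 1 <= a] = [forall i, f i <= a.+1].
  by apply/eq_forallb => i; rewrite leq_subLR add1n.
case: (boolP [forall i, 0 < f i]) => [/forallP f_gt0 | /forallPn [j]].
  have sum_pred : \sum_i f i = \sum_i (f i - 1) + n.+1.
    rewrite -[in X in _ = _ + X](card_ord n.+1) -sum1_card -big_split /=.
    by apply: eq_bigr => i _; rewrite subnK.
  by case: [forall i, f i <= a.+1]; rewrite /= ?andbF ?andbT // sum_pred;
    move: (\sum_i (f i - 1)) => T; nia.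
(* A vanishing f j bounds the sum of the f i by n(a+1), which forces x = a+2. *)
rewrite lt0n negbK => /eqP fj0.
case: (boolP [forall i, f i <= a.+1]) => [/forallP f_le|]; rewrite /= ?andbF //.
have : \sum_i f i <= n * a.+1.
  rewrite (bigD1 j) //= fj0 add0n.
  apply: (@leq_trans (\sum_(i | i != j) a.+1)); first exact: leq_sum.
  by rewrite sum_nat_const cardC1 card_ord.
rewrite andbT addn0; move: (\sum_i f i) => S; nia.
Qed.

End MboxCount.

Section MonomialCoefficients.
Variable K : nzRingType.

Lemma mcoeffMX_lep n (p : {mpoly K[n]}) (u m : 'X_{1..n}) :
  (p * 'X_[u])@_m = if (u <= m)%MM then p@_(m - u) else 0.
Proof.
case: ifP => le_um; first by rewrite -{1}(submK le_um) addmC mcoeffMX.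
rewrite mcoeffM big1 // => -[m1 m2] /= /eqP m_eq; rewrite mcoeffX.
case: eqP => [m2_eq|]; last by rewrite mulr0.
suff : (u <= m)%MM by rewrite le_um.
by apply/mnm_lepP => i; rewrite m_eq -m2_eq mnmDE leq_addl.
Qed.

Lemma mcoeffMXi n (p : {mpoly K[n]}) i m :
  (p * 'X_i)@_m = if (0 < m i)%N then p@_(m - U_(i)) else 0.
Proof. by rewrite mcoeffMX_lep lep1mP lt0n. Qed.

Definition mnmones n : 'X_{1..n} := [multinom 1%N | _ < n].

Lemma mprodX_ones n : \prod_(i < n) 'X_i = 'X_[mnmones n] :> {mpoly K[n]}.
Proof. by rewrite mpolyXE_id; apply: eq_bigr => i _; rewrite mnmE expr1. Qed.

Lemma lep_mnmones n (m : 'X_{1..n}) : (mnmones n <= m)%MM = [forall i, 0 < m i]%N.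
Proof. by apply/mnm_lepP/forallP => le_m i; have := le_m i; rewrite mnmE. Qed.

Lemma mcoeffM_prodX n (p : {mpoly K[n]}) m :
  (p * \prod_(i < n) 'X_i)@_m
  = if [forall i, 0 < m i]%N then p@_(m - mnmones n) else 0.
Proof. by rewrite mprodX_ones mcoeffMX_lep lep_mnmones. Qed.

Definition mnmrestr n (m : 'X_{1..n.+1}) : 'X_{1..n} :=
  [multinom m (widen_ord (leqnSn n) i) | i < n].

Lemma mnmwiden_restr n (m : 'X_{1..n.+1}) :
  m ord_max = 0%N -> mnmwiden (mnmrestr m) = m.
Proof.
move=> m_max; apply/mnmP => i; case: (unliftP ord_max i) => [j ->|->].
  by rewrite lift_max_widen mnmwiden_widen mnmE.
by rewrite mnmwiden_ordmax m_max.
Qed.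

Lemma mcoeff_mwiden n (p : {mpoly K[n]}) (m : 'X_{1..n.+1}) :
  (mwiden p)@_m = if m ord_max == 0%N then p@_(mnmrestr m) else 0.
Proof.
case: eqP => [/mnmwiden_restr {1}<-|m_max]; first by rewrite mwiden_mnmwiden.
rewrite (mwidenE (k := msize p)) // raddf_sum big1 // => m' _.
rewrite /= mcoeffZ mcoeffX; case: eqP => [m_eq|]; last by rewrite mulr0.
by move: m_max; rewrite -m_eq mnmwiden_ordmax.
Qed.

Lemma mcoeff_mwidenMXn n (p : {mpoly K[n]}) j (m : 'X_{1..n.+1}) :
  (mwiden p * 'X_ord_max ^+ j)@_m
  = if m ord_max == j then p@_(mnmrestr m) else 0.
Proof.
rewrite mpolyXn mcoeffMX_lep mcoeff_mwiden mnmBE mulmnE mnm1E eqxx mul1n.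
have -> : (U_(ord_max) *+ j <= m)%MM = (j <= m ord_max)%N.
  apply/mnm_lepP/idP => [le_m | le_j i]; first by have := le_m ord_max;
    rewrite mulmnE mnm1E eqxx mul1n.
  by rewrite mulmnE mnm1E; case: eqP => [<-|]; rewrite ?mul1n ?mul0n.
have -> : mnmrestr (m - U_(ord_max) *+ j) = mnmrestr m.
  by apply/mnmP => i; rewrite !mnmE mulmnE mnm1E ord_max_widenF mul0n subn0.
case: (ltngtP j (m ord_max)) => [lt_jm|lt_mj|->]; rewrite ?subnn ?eqxx //=.
by rewrite subn_eq0 leqNgt lt_jm.
Qed.

End MonomialCoefficients.

Section BoxPolynomial.
Variable K : nzRingType.

Definition boxmnm n a (m : 'X_{1..n}) : bool :=
  (mdeg m == n.-1 * a)%N && [forall i, m i <= a]%N.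

Definition mbox n a : {mpoly K[n]} :=
  \sum_(m : 'X_{1..n < (n.-1 * a).+1} | boxmnm a m) 'X_[m].

Lemma mcoeff_mbox n a m : (mbox n a)@_m = (boxmnm a m)%:R.
Proof.
rewrite raddf_sum /=; under eq_bigr do rewrite mcoeffX.
case: (ltnP (mdeg m) (n.-1 * a).+1) => [small_m|big_m].
  rewrite big_mkcond (bigD1 (BMultinom small_m)) //= eqxx big1 ?addr0.
    by case: (boxmnm a m).
  move=> m' m'_neq; case: (boxmnm a m') => //; case: eqP => // m'_eq.
  by case/eqP: m'_neq; apply: val_inj.
rewrite big1 => [|m' _]; last first.
  by case: eqP => // m'_eq; move: (bmdeg m'); rewrite m'_eq ltnNge big_m.
by rewrite /boxmnm; case: eqP => // deg_m; move: big_m; rewrite deg_m ltnn.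
Qed.

Lemma mbox_sym n a : mbox n a \is symmetric.
Proof.
apply/issymP => s; apply/mpolyP => m; rewrite mcoeff_sym !mcoeff_mbox.
rewrite /boxmnm mdeg_mperm; congr ((_ && _)%:R).
apply/forallP/forallP => le_m i; last by rewrite mnmE.
by have := le_m (s^-1 i)%g; rewrite mnmE permKV.
Qed.

Lemma mbox_eq1 n a : (n.-1 * a = 0)%N -> mbox n a = 1.
Proof.
move=> deg0; apply/mpolyP => m; rewrite mcoeff_mbox mcoeff1 /boxmnm deg0 mdeg_eq0.
case: eqP => //= ->.
by rewrite (_ : [forall i, _] = true) //; apply/forallP => i; rewrite mnm0E.
Qed.

Lemma boxmnmE n a (m : 'X_{1..n.+1}) (g : 'I_n -> nat) x :
  (forall i, m (widen_ord (leqnSn n) i) = g i) -> m ord_max = x ->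
  boxmnm a m = [&& \sum_i g i + x == n * a, [forall i, g i <= a] & x <= a]%N.
Proof.
move=> m_widen m_max; rewrite /boxmnm mdegE big_ord_recr forall_ord_recr /= m_max.
rewrite (eq_bigr g) //; congr (_ && (_ && _)).
by apply/eq_forallb => i; rewrite m_widen.
Qed.

Lemma boxmnm_restr n a (m : 'X_{1..n.+1}) (g : 'I_n -> nat) :
  (forall i, m (widen_ord (leqnSn n) i) = g i) ->
  boxmnm a (mnmrestr m) = (\sum_i g i == n.-1 * a)%N && [forall i, g i <= a]%N.
Proof.
move=> m_widen; rewrite /boxmnm mdegE (eq_bigr g) => [|i _]; last by rewrite mnmE.
by congr (_ && _); apply/eq_forallb => i; rewrite mnmE m_widen.
Qed.

Lemma mbox_rec n a :
  mbox n.+2 a.+1 * 'X_ord_max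
  = mwiden (mbox n.+1 a.+1) * 'X_ord_max ^+ a.+2 + mbox n.+2 a * \prod_(i < n.+2) 'X_i.
Proof.
apply/mpolyP => m; rewrite mcoeffD mcoeffMXi mcoeff_mwidenMXn mcoeffM_prodX.
rewrite !mcoeff_mbox forall_ord_recr.
set g := fun i => m (widen_ord (leqnSn n.+1) i).
rewrite (@boxmnm_restr _ _ _ g) //.
rewrite (@boxmnmE _ _ _ g (m ord_max - 1)%N); first last.
- by rewrite mnmBE mnm1E eqxx.
- by move=> i; rewrite mnmBE mnm1E ord_max_widenF subn0.
rewrite (@boxmnmE _ _ _ (fun i => g i - 1)%N (m ord_max - 1)%N); first last.
- by rewrite mnmBE mnmE.
- by move=> i; rewrite mnmBE mnmE.
have if_natr (b c : bool) : (if b then c%:R else 0 : K) = (b && c)%:R by case: b.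
by rewrite !if_natr mbox_rec_count natrD.
Qed.

Lemma mbox2 k :
  mbox 2 k = \sum_(i < k.+1) 'X_(0 : 'I_2) ^+ i * 'X_(1 : 'I_2) ^+ (k - i).
Proof.
apply/mpolyP => m; rewrite mcoeff_mbox raddf_sum /=.
under eq_bigr do rewrite !mpolyXn -mpolyXD mcoeffX.
set y0 := m (0 : 'I_2); set y1 := m (1 : 'I_2).
have ord2P (P : 'I_2 -> Prop) : P 0 -> P 1 -> forall j, P j.
  by move=> P0 P1 -[[|[|//]] lt_j2]; [rewrite (_ : Ordinal _ = 0) | rewrite (_ : Ordinal _ = 1)];
    try apply: val_inj.
have -> : boxmnm k m = (y0 + y1 == k)%N.
  rewrite /boxmnm mul1n.
  have -> : mdeg m = (y0 + y1)%N.
    by rewrite mdegE !big_ord_recl big_ord0 addn0; congr (m _ + m _)%N; apply: val_inj.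
  case: eqP => //= deg_m.
  by apply/forallP; apply: ord2P; rewrite -deg_m ?leq_addr ?leq_addl.
have term_eq (i : 'I_k.+1) :
    ((U_(0%R : 'I_2) *+ i + U_(1%R : 'I_2) *+ (k - i))%MM == m) = (y0 == i) && (y0 + y1 == k)%N.
  have le_ik := ltn_ord i; rewrite ltnS in le_ik.
  apply/eqP/andP => [m_eq|[/eqP y0_i /eqP deg_m]].
    by rewrite /y0 /y1 -m_eq !mnmDE !mulmnE !mnm1E /=; split; apply/eqP; lia.
  by apply/mnmP; apply: ord2P; rewrite !mnmDE !mulmnE !mnm1E /= -/y0 -/y1; lia.
under eq_bigr do rewrite term_eq.
case: eqP => deg_m; last by rewrite big1 // => i _; rewrite andbF.
have lt_y0k : (y0 < k.+1)%N by lia.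
rewrite (bigD1 (Ordinal lt_y0k)) //= eqxx big1 ?addr0 // => i ne_i.
by rewrite andbT; case: eqP => // y0_i; case/eqP: ne_i; apply: val_inj.
Qed.
End BoxPolynomial.

Theorem mainTheorem18 (k : nat) :
  exists (phi varphi : forall i : nat, {mpoly R[i]}),
    (forall i : nat, (1 <= i <= k.+2)%N -> phi i \is symmetric) /\
    (forall j : nat, (2 <= j <= k.+2)%N -> varphi j \is symmetric) /\
    phi 1%N = 1 /\ phi k.+1 = 1 /\ phi k.+2 = 0 /\
    varphi 2%N = \sum_(i < k.+1) ('X_(0 : 'I_2) ^+ i * 'X_(1 : 'I_2) ^+ (k - i)) /\
    varphi k.+2 = 1 /\
    (forall i : nat, (1 <= i <= k.+1)%N ->
       mwiden (phi i) * 'X_(ord_max : 'I_i.+1) ^+ (k.+2 - i)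
         - varphi i.+1 * 'X_(ord_max : 'I_i.+1)
       = - (phi i.+1 * \prod_(j < i.+1) 'X_j)).
Proof.
(* Without the test, truncated subtraction would give phi (k+2) = mbox (k+2) 0 = 1. *)
exists (fun i => if i == k.+2 then 0 else mbox R i (k.+1 - i)).
exists (fun j => mbox R j (k.+2 - j)).
have top_neq (i : nat) : (i <= k)%N -> (i.+1 == k.+2) = false by move=> ?; lia.
split; first by move=> i _; case: eqP => _; [exact: rpred0 | exact: mbox_sym].
split; first by move=> j _; exact: mbox_sym.
split; first by rewrite /= mbox_eq1.
split; first by rewrite top_neq // subnn mbox_eq1 ?muln0.
split; first by rewrite eqxx.
split; first by rewrite !subSS subn0 mbox2.
split; first by rewrite subnn mbox_eq1 ?muln0.
case=> [//|n] /andP [_ le_nk]; rewrite top_neq //= !subSS.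
have [k_eq|lt_nk] := eqVneq n k.
  rewrite k_eq eqxx subSn // subnn !mbox_eq1 ?muln0 //.
  by rewrite mwiden1 expr1 !mul1r subrr mul0r oppr0.
have [a [-> -> ->]] :
    exists a, [/\ k.+1 - n = a.+2, k - n = a.+1 & k - n.+1 = a]%N.
  by exists (k - n.+1)%N; split; lia.
by rewrite top_neq 1?mbox_rec 1?opprD 1?addrA 1?subrr 1?add0r //; lia.
Qed.
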